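(* Let $e[r]$ be an affine function of $r$ with $e[1]>0$ and $e[-1]>0$. The set $U$ is convex and its closure splits as $\overline U=K_-'\cup\overline U_0\cup K_+'$. In particular $K\subset\overline U$.
   Context: Let $n\ge2$, $\mathcal S_0^{n\times n}$ the trace-free symmetric matrices, $Z:=\mathbb{R}\times\mathbb{R}^n\times\mathbb{R}^n\times\mathcal S_0^{n\times n}\times\mathbb{R}$ with elements $z=(\rho,v,m,\sigma,p)$. $K:=\{z:\rho\in\{\pm1\},m=\rho v,v\otimes v-\sigma=e[\rho]\mathrm{Id}\}$. For $\rho\in(-1,1)$: $M(z)=\frac{v\otimes v-\rho(m\otimes v+v\otimes m)+m\otimes m}{1-\rho^2}-\sigma$, $Q(z)=\lambda_{\max}(M(z))$, $T_\pm(z)=\frac{|m\pm v|^2}{n(\rho\pm1)^2}$. $U:=\{z:\rho\in(-1,1),T_\pm(z)<e[\pm1],Q(z)<e[\rho]\}$, $\overline U_0:=\{z:\rho\in(-1,1),T_\pm(z)\le e[\pm1],Q(z)\le e[\rho]\}$, $K_\pm':=\{z:\rho=\pm1,m=\pm v,\lambda_{\max}(v\otimes v-\sigma)\le e[\pm1]\}$. *)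

From mathcomp Require Import all_boot all_algebra all_classical all_reals all_analysis.
Set Implicit Arguments. Unset Strict Implicit. Unset Printing Implicit Defensive.
Import GRing.Theory Num.Theory.
Import numFieldNormedType.Exports.
Local Open Scope ring_scope.
Local Open Scope classical_set_scope.

(* Z = R x R^n x R^n x S_0^{nxn} x R.  Row vectors stand for R^n; the matrix
   component ranges over all of 'M_n, and every set below additionally
   requires it to be symmetric and trace-free. *)
Definition Z (R : realType) (n : nat) :=
  (R * 'rV[R]_n * 'rV[R]_n * 'M[R]_n * R)%type.

Section Defs.
Variables (R : realType) (n : nat).

Definition S0 (s : 'M[R]_n) : Prop := s^T = s /\ \tr s = 0.

(* tensor product a (x) b = a b^T (vectors stored as rows) *)
Definition tens (a b : 'rV[R]_n) : 'M[R]_n := a^T *m b.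

Definition sqnorm (u : 'rV[R]_n) : R := \sum_(i < n) u 0 i ^+ 2.

Definition lambda_max (A : 'M[R]_n) : R := sup [set a : R | eigenvalue A a].

Definition Mz (z : Z R n) : 'M[R]_n :=
  let: (rho, v, m, s, p) := z in
  (1 - rho ^+ 2)^-1 *: (tens v v - rho *: (tens m v + tens v m) + tens m m) - s.

Definition Qz (z : Z R n) : R := lambda_max (Mz z).

Definition Tplus (z : Z R n) : R :=
  let: (rho, v, m, s, p) := z in sqnorm (m + v) / (n%:R * (rho + 1) ^+ 2).

Definition Tminus (z : Z R n) : R :=
  let: (rho, v, m, s, p) := z in sqnorm (m - v) / (n%:R * (rho - 1) ^+ 2).

Variable e : R -> R.

Definition Kset : set (Z R n) :=
  [set z | let: (rho, v, m, s, p) := z in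
     S0 s /\ (rho = 1 \/ rho = -1) /\ m = rho *: v /\
     tens v v - s = e rho *: 1%:M].

Definition Uset : set (Z R n) :=
  [set z | let: (rho, v, m, s, p) := z in
     S0 s /\ -1 < rho < 1 /\ Tplus z < e 1 /\ Tminus z < e (-1) /\ Qz z < e rho].

Definition U0bar : set (Z R n) :=
  [set z | let: (rho, v, m, s, p) := z in
     S0 s /\ -1 < rho < 1 /\ Tplus z <= e 1 /\ Tminus z <= e (-1) /\ Qz z <= e rho].

Definition Kplus' : set (Z R n) :=
  [set z | let: (rho, v, m, s, p) := z in
     S0 s /\ rho = 1 /\ m = v /\ lambda_max (tens v v - s) <= e 1].

Definition Kminus' : set (Z R n) :=
  [set z | let: (rho, v, m, s, p) := z in
     S0 s /\ rho = -1 /\ m = - v /\ lambda_max (tens v v - s) <= e (-1)].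

End Defs.

Definition affine (R : realType) (e : R -> R) : Prop :=
  exists a b : R, forall r, e r = a + b * r.

Definition convex_in (R : realType) (n : nat) (A : set (Z R n)) : Prop :=
  forall (z w : Z R n) (t : R), A z -> A w -> 0 <= t <= 1 ->
    A (t *: z + (1 - t) *: w).

From mathcomp Require Import all_boot all_algebra all_classical all_reals all_analysis.
From mathcomp Require Import ring lra.
Import order.Order.TTheory GRing.Theory Num.Theory.
Import numFieldNormedType.Exports.
Set Implicit Arguments. Unset Strict Implicit. Unset Printing Implicit Defensive.
Local Open Scope ring_scope.
Local Open Scope classical_set_scope.

(* For -1 < rho < 1 the quadratic form of M(z) is
     x |-> ((x.(m+v))^2 / (1+rho) + (x.(m-v))^2 / (1-rho)) / 2 - x sigma x^T,
   and lambda_max(M) <= c means that this form is at most c |x|^2, because a maximiser of the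
   Rayleigh quotient on the unit sphere is an eigenvector.  Every constraint defining U is then
   convex in z: (a, b) |-> a^2 / b is convex for b > 0, {(a, beta) | |a|^2 <= k beta^2} is a
   convex cone and e is affine.  More precisely, the segment from a point of the non-strict set
   Ubar to a point of U lies in U except for its first endpoint; as 0 is in U, Ubar lies in the
   closure of U.  Conversely the non-strict constraints, cleared of denominators, are closed.
   At rho = +-1 they force m = +-v and reduce to lambda_max(v (x) v - sigma) <= e[+-1], i.e. to
   K'_+-, where the bound on T_+- comes from taking the trace. *)

Section RowVectorForms.
Variables (R : realType) (n : nat).
Implicit Types (x y a b : 'rV[R]_n) (A B : 'M[R]_n).

Definition dot x y : R := \sum_(i < n) x 0 i * y 0 i.
Definition qform A x : R := (x *m A *m x^T) 0 0.
Definition bform A x y : R := (x *m A *m y^T) 0 0.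

Lemma dotC x y : dot x y = dot y x.
Proof. by apply: eq_bigr => i _; rewrite mulrC. Qed.

Lemma dotDr x a b : dot x (a + b) = dot x a + dot x b.
Proof. by rewrite /dot -big_split; apply: eq_bigr => i _; rewrite mxE mulrDr. Qed.

Lemma dotZr x (c : R) a : dot x (c *: a) = c * dot x a.
Proof. by rewrite /dot mulr_sumr; apply: eq_bigr => i _; rewrite mxE mulrCA. Qed.

Lemma dotNr x a : dot x (- a) = - dot x a.
Proof. by rewrite -scaleN1r dotZr mulN1r. Qed.

Lemma dot0r x : dot x 0 = 0.
Proof. by rewrite -(scale0r 0) dotZr mul0r. Qed.

Lemma dotDl x a b : dot (a + b) x = dot a x + dot b x.
Proof. by rewrite dotC dotDr !(dotC x). Qed.

Lemma dotZl x (c : R) a : dot (c *: a) x = c * dot a x.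
Proof. by rewrite dotC dotZr dotC. Qed.

Lemma dotNl x a : dot (- a) x = - dot a x.
Proof. by rewrite dotC dotNr dotC. Qed.

Lemma dot0l x : dot 0 x = 0.
Proof. by rewrite dotC dot0r. Qed.

Lemma dot_mulmx x y : (x *m y^T) 0 0 = dot x y.
Proof. by rewrite mxE; apply: eq_bigr => i _; rewrite mxE. Qed.

Lemma sqnorm_dot x : sqnorm x = dot x x.
Proof. by apply: eq_bigr => i _; rewrite expr2. Qed.

Lemma sqnorm_ge0 x : 0 <= sqnorm x.
Proof. by apply: sumr_ge0 => i _; rewrite sqr_ge0. Qed.

Lemma sqnorm_le0 x : sqnorm x <= 0 -> x = 0.
Proof.
move=> x_le0; have /eqP : sqnorm x = 0 by apply/eqP; rewrite eq_le x_le0 sqnorm_ge0.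
rewrite /sqnorm psumr_eq0 => [/allP x0|i _]; last by rewrite sqr_ge0.
apply/rowP => i; rewrite mxE.
by have := x0 i (mem_index_enum i); rewrite sqrf_eq0 => /eqP.
Qed.

Lemma sqnorm_gt0 x : x != 0 -> 0 < sqnorm x.
Proof.
move=> x0; rewrite lt_neqAle sqnorm_ge0 andbT eq_sym.
by apply: contra x0 => /eqP x0; apply/eqP/sqnorm_le0; rewrite x0.
Qed.

Lemma sqnorm0 : sqnorm (0 : 'rV[R]_n) = 0.
Proof. by rewrite sqnorm_dot dot0r. Qed.

Lemma sqnormZ (c : R) x : sqnorm (c *: x) = c ^+ 2 * sqnorm x.
Proof. by rewrite !sqnorm_dot dotZr dotZl mulrA expr2. Qed.

Lemma sqnormN x : sqnorm (- x) = sqnorm x.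
Proof. by rewrite !sqnorm_dot dotNl dotNr opprK. Qed.

Lemma sqnorm_double x : sqnorm (x + x) = 4 * sqnorm x.
Proof. by rewrite !sqnorm_dot !dotDl !dotDr; ring. Qed.

Lemma sqnorm_delta i : sqnorm (delta_mx 0 i : 'rV[R]_n) = 1.
Proof.
rewrite /sqnorm (bigD1 i) //= big1 => [|j ji]; first by rewrite mxE !eqxx expr1n addr0.
by rewrite mxE (negbTE ji) andbF expr0n.
Qed.

Lemma qform_tens a b x : qform (tens a b) x = dot x a * dot x b.
Proof.
rewrite /qform /tens.
have -> : x *m (a^T *m b) *m x^T = (x *m a^T) *m (b *m x^T) by rewrite !mulmxA.
by rewrite mxE big_ord1 !dot_mulmx (dotC b).
Qed.

Lemma qformD A B x : qform (A + B) x = qform A x + qform B x.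
Proof. by rewrite /qform mulmxDr mulmxDl mxE. Qed.

Lemma qformZ (c : R) A x : qform (c *: A) x = c * qform A x.
Proof. by rewrite /qform -scalemxAr -scalemxAl mxE. Qed.

Lemma qformN A x : qform (- A) x = - qform A x.
Proof. by rewrite -scaleN1r qformZ mulN1r. Qed.

Lemma qformB A B x : qform (A - B) x = qform A x - qform B x.
Proof. by rewrite qformD qformN. Qed.

Lemma qform_scalar (c : R) x : qform c%:M x = c * sqnorm x.
Proof. by rewrite /qform mul_mx_scalar -scalemxAl mxE dot_mulmx sqnorm_dot. Qed.

Lemma qformZv (c : R) A x : qform A (c *: x) = c ^+ 2 * qform A x.
Proof. by rewrite /qform linearZ /= -scalemxAr -!scalemxAl !mxE expr2 mulrA. Qed.

Lemma qform0 x : qform 0 x = 0.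
Proof. by rewrite /qform mulmx0 mul0mx mxE. Qed.

Lemma qform0v A : qform A 0 = 0.
Proof. by rewrite /qform !mul0mx mxE. Qed.

Lemma qformDv A x y : qform A (x + y) = qform A x + bform A x y + bform A y x + qform A y.
Proof. by rewrite /qform /bform linearD /= !mulmxDl !mulmxDr !mxE; ring. Qed.

Lemma bformC A x y : A^T = A -> bform A x y = bform A y x.
Proof.
move=> sA; rewrite /bform -[in LHS](trmxK (x *m A *m y^T)) mxE.
by rewrite !trmx_mul trmxK sA mulmxA.
Qed.

Lemma bformZr A x (c : R) y : bform A x (c *: y) = c * bform A x y.
Proof. by rewrite /bform linearZ /= -scalemxAr mxE. Qed.

Lemma qform_delta A i : qform A (delta_mx 0 i) = A i i.
Proof. by rewrite /qform -rowE trmx_delta -colE !mxE. Qed.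

Lemma qform_eigenvector A v (c : R) : v *m A = c *: v -> qform A v = c * sqnorm v.
Proof. by move=> vA; rewrite /qform vA -scalemxAl mxE dot_mulmx sqnorm_dot. Qed.

Lemma mxtrace_le_qform A (c : R) : (forall x, qform A x <= c * sqnorm x) -> \tr A <= n%:R * c.
Proof.
move=> Ac; rewrite mulr_natl -[n in c *+ n]card_ord -sumr_const; apply: ler_sum => i _.
by have := Ac (delta_mx 0 i); rewrite qform_delta sqnorm_delta mulr1.
Qed.

Lemma tr_tens x : \tr (tens x x) = sqnorm x.
Proof. by rewrite /tens mxtrace_mulC /mxtrace big_ord1 dot_mulmx sqnorm_dot. Qed.

End RowVectorForms.

Lemma continuousT_comp (S T U : topologicalType) (f : S -> T) (g : T -> U) :
  continuous f -> continuous g -> continuous (fun x => g (f x)).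
Proof. by move=> cf cg x; apply: continuous_comp; [exact: cf | exact: cg]. Qed.

Lemma continuous_fst (S T U : topologicalType) (f : U -> S * T) :
  continuous f -> continuous (fun z => (f z).1).
Proof. by move=> cf z; apply: continuous_comp (cf z) _; exact: cvg_fst. Qed.

Lemma continuous_snd (S T U : topologicalType) (f : U -> S * T) :
  continuous f -> continuous (fun z => (f z).2).
Proof. by move=> cf z; apply: continuous_comp (cf z) _; exact: cvg_snd. Qed.

Section RealContinuity.
Variables (R : realType) (T : topologicalType).
Implicit Types f g : T -> R.

Lemma continuous_add (V : normedModType R) (f g : T -> V) :
  continuous f -> continuous g -> continuous (fun z => f z + g z).
Proof. by move=> cf cg z; exact: (continuousD (cf z) (cg z)). Qed.

Lemma continuous_opp (V : normedModType R) (f : T -> V) :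
  continuous f -> continuous (fun z => - f z).
Proof. by move=> cf z; exact: (continuousN (cf z)). Qed.

Lemma continuous_mul f g : continuous f -> continuous g -> continuous (fun z => f z * g z).
Proof. by move=> cf cg z; exact: (continuousM (cf z) (cg z)). Qed.

Lemma continuous_sum k (f : 'I_k -> T -> R) :
  (forall i, continuous (f i)) -> continuous (fun z => \sum_(i < k) f i z).
Proof. by move=> cf; apply: continuous_big => //; exact: add_continuous. Qed.

Lemma continuous_sqr f : continuous f -> continuous (fun z => f z ^+ 2).
Proof. by move=> cf; apply: continuous_mul. Qed.

Lemma closure_le_continuous (A : set T) f g : continuous f -> continuous g ->
  (forall z, A z -> f z <= g z) -> forall z, closure A z -> f z <= g z.
Proof.
move=> cf cg fg; have : closed [set z | f z <= g z].
  rewrite (_ : [set z | _] = (fun z => g z - f z) @^-1` [set r | 0 <= r]).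
    apply: (proj1 (continuous_closedP _)); last exact: closed_ge.
    exact: continuous_add cg (continuous_opp cf).
  by apply/seteqP; split => z /=; rewrite subr_ge0.
by move=> /closure_id fgE z /(closureS fg); rewrite -fgE.
Qed.

End RealContinuity.

Section FormContinuity.
Variables (R : realType) (n : nat).

Lemma qform_sum (A : 'M[R]_n) (x : 'rV[R]_n) :
  qform A x = \sum_j (\sum_i x 0 i * A i j) * x 0 j.
Proof. by rewrite /qform mxE; apply: eq_bigr => j _; rewrite !mxE. Qed.

Lemma sqnorm_continuous : continuous (@sqnorm R n).
Proof.
apply: continuous_sum => i; rewrite (funext (fun x : 'rV[R]_n => expr2 (x 0 i))).
by apply: continuous_mul; exact: coord_continuous.
Qed.

Lemma dot_continuous (x : 'rV[R]_n) : continuous (dot x).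
Proof.
apply: continuous_sum => i.
by apply: continuous_mul; [exact: cst_continuous|exact: coord_continuous].
Qed.

Lemma qform_continuous (A : 'M[R]_n) : continuous (qform A).
Proof.
rewrite (funext (qform_sum A)); apply: continuous_sum => j.
apply: continuous_mul; last exact: coord_continuous.
apply: continuous_sum => i.
by apply: continuous_mul; [exact: coord_continuous|exact: cst_continuous].
Qed.

Lemma qform_continuous_mx (x : 'rV[R]_n) : continuous (fun A : 'M[R]_n => qform A x).
Proof.
rewrite (funext (fun A => qform_sum A x)); apply: continuous_sum => j.
apply: continuous_mul; last exact: cst_continuous.
apply: continuous_sum => i.
by apply: continuous_mul; [exact: cst_continuous|exact: coord_continuous].
Qed.

End FormContinuity.

Section LambdaMax.
Variables (R : realType) (n : nat).
Hypothesis n_gt0 : (0 < n)%N.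
Implicit Types (x c : 'rV[R]_n) (A B : 'M[R]_n).

Lemma sphere_compact : compact [set x : 'rV[R]_n | sqnorm x = 1].
Proof.
apply: (subclosed_compact _ (rV_compact (fun=> @segment_compact R (-1) 1))).
  exact: (proj1 (continuous_closedP _) (@sqnorm_continuous R n) _ (@closed_eq _ 1)).
move=> x /= x1 i; rewrite /= in_itv /=.
have : x 0 i ^+ 2 <= 1.
  by rewrite -x1 /sqnorm (bigD1 i) //= lerDl; apply: sumr_ge0 => j _; rewrite sqr_ge0.
by move=> xi; apply/andP; split; nra.
Qed.

Lemma qform_rayleigh_max A :
  exists2 c, sqnorm c = 1 & forall x, qform A x <= qform A c * sqnorm x.
Proof.
have sphere0 : [set x : 'rV[R]_n | sqnorm x = 1] !=set0.
  by exists (delta_mx 0 (Ordinal n_gt0)); exact: sqnorm_delta.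
have [c] := EVT_max_rV sphere0 sphere_compact (continuous_subspaceT (@qform_continuous R n A)).
rewrite inE => /= c1 cmax; exists c => // x.
have [->|x0] := eqVneq x 0; first by rewrite qform0v sqnorm0 mulr0.
have s0 := sqnorm_gt0 x0; set s := sqnorm x in s0 *.
have k2 : (Num.sqrt s)^-1 ^+ 2 = s^-1 by rewrite exprVn sqr_sqrtr // ltW.
have := cmax ((Num.sqrt s)^-1 *: x); rewrite !inE /= sqnormZ k2 mulVf ?gt_eqF //.
move=> /(_ erefl); rewrite qformZv k2 -ler_pdivlMl ?invr_gt0 // invrK => h.
by rewrite mulrC.
Qed.

Lemma psd_qform_eq0 B c : B^T = B -> (forall y, 0 <= qform B y) -> qform B c = 0 ->
  c *m B = 0.
Proof.
move=> sB psd qBc.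
have bform0 y : bform B y c = 0.
  set b := bform B y c; set q := qform B y; have q0 : 0 <= q by exact: psd.
  (* 0 <= qform B (c + t y) = 2 t b + t^2 q for every t; this t forces b = 0. *)
  set t := - b / (q + 1); have tq : t * (q + 1) = - b by rewrite mulfVK // gt_eqF // ltr_pwDr.
  have := psd (c + t *: y).
  rewrite qformDv qBc qformZv [bform B (t *: y) c]bformC // bformZr [bform B c y]bformC //.
  rewrite -/b -/q add0r => h; nra.
have : sqnorm (B *m c^T)^T = 0.
  by rewrite sqnorm_dot -dot_mulmx trmxK -[RHS](bform0 (B *m c^T)^T) /bform mulmxA.
move/eqP; rewrite eq_le => /andP [/sqnorm_le0 Bc _].
by rewrite -(trmxK (c *m B)) trmx_mul sB Bc.
Qed.

Lemma lambda_max_spec A : A^T = A ->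
  (exists2 c, c != 0 & qform A c = lambda_max A * sqnorm c) /\
  forall x, qform A x <= lambda_max A * sqnorm x.
Proof.
move=> sA; have [c c1 cmax] := qform_rayleigh_max A; set mu := qform A c in cmax.
have c0 : c != 0 by apply: contra_eqN c1 => /eqP ->; rewrite sqnorm0 eq_sym oner_eq0.
have cA : c *m A = mu *: c.
  (* mu%:M - A is positive semidefinite and its form vanishes at c. *)
  have psd y : 0 <= qform (mu%:M - A) y by rewrite qformB qform_scalar subr_ge0.
  have /psd_qform_eq0 : qform (mu%:M - A) c = 0 by rewrite qformB qform_scalar c1 mulr1 subrr.
  rewrite linearB /= tr_scalar_mx sA => /(_ erefl psd) /eqP.
  by rewrite mulmxBr mul_mx_scalar subr_eq0 => /eqP.
have ub : ubound [set a : R | eigenvalue A a] mu.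
  move=> a /eigenvalueP [v vA v0].
  by have := cmax v; rewrite (qform_eigenvector vA) ler_pM2r // sqnorm_gt0.
have Amu : eigenvalue A mu by apply/eigenvalueP; exists c.
have -> : lambda_max A = mu.
  apply/eqP; rewrite eq_le ge_sup //=; last by exists mu.
  by apply: sup_upper_bound => //; split; exists mu.
by split => //; exists c => //; exact: qform_eigenvector.
Qed.

Lemma lambda_max_le A (k : R) : A^T = A ->
  lambda_max A <= k <-> forall x, qform A x <= k * sqnorm x.
Proof.
move=> /lambda_max_spec [[c c0 Ac] Amax]; split => [Ak x|Ak].
  by apply: le_trans (Amax x) _; rewrite ler_wpM2r // sqnorm_ge0.
by have := Ak c; rewrite Ac ler_pM2r // sqnorm_gt0.
Qed.

Lemma lambda_max_lt A (k : R) : A^T = A ->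
  lambda_max A < k <-> forall x, x != 0 -> qform A x < k * sqnorm x.
Proof.
move=> /lambda_max_spec [[c c0 Ac] Amax]; split => [Ak x x0|Ak].
  by apply: le_lt_trans (Amax x) _; rewrite ltr_pM2r // sqnorm_gt0.
by have := Ak c c0; rewrite Ac ltr_pM2r // sqnorm_gt0.
Qed.

End LambdaMax.

Section ConvexBounds.
Variable R : realType.

(* The case b = 0 relies on the convention a ^+ 2 / 0 = 0. *)
Lemma sqr_div_convex (a a' b b' t : R) :
  0 <= b -> (b = 0 -> a = 0) -> 0 < b' -> 0 <= t < 1 ->
  (t * a + (1 - t) * a') ^+ 2 / (t * b + (1 - t) * b') <=
    t * (a ^+ 2 / b) + (1 - t) * (a' ^+ 2 / b').
Proof.
move=> b_ge0 ab b'_gt0 /andP [t_ge0 t_lt1].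
have t1 : 1 - t != 0 by rewrite subr_eq0 eq_sym lt_eqF.
have [b0|b_neq0] := eqVneq b 0.
  rewrite b0 (ab b0) expr0n /= !(mulr0, mul0r, add0r) le_eqVlt; apply/orP; left.
  by apply/eqP; field; rewrite t1 gt_eqF.
have b_gt0 : 0 < b by rewrite lt_neqAle eq_sym b_neq0.
have D_gt0 : 0 < t * b + (1 - t) * b' by rewrite ltr_wpDl ?mulr_ge0 ?mulr_gt0 ?subr_gt0 // ltW.
rewrite -subr_ge0.
have -> : t * (a ^+ 2 / b) + (1 - t) * (a' ^+ 2 / b') -
    (t * a + (1 - t) * a') ^+ 2 / (t * b + (1 - t) * b') =
    t * (1 - t) * (a * b' - a' * b) ^+ 2 / (b * b' * (t * b + (1 - t) * b')).
  by field; rewrite !gt_eqF.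
apply: divr_ge0; first by rewrite mulr_ge0 ?sqr_ge0 // mulr_ge0 // subr_ge0 ltW.
by rewrite !mulr_ge0 // ltW.
Qed.

Variable n : nat.

Lemma sqnorm_cone_comb (a b : 'rV[R]_n) (be be' t k : R) :
  0 <= be -> 0 < be' -> 0 <= t < 1 ->
  sqnorm a <= k * be ^+ 2 -> sqnorm b < k * be' ^+ 2 ->
  sqnorm (t *: a + (1 - t) *: b) < k * (t * be + (1 - t) * be') ^+ 2.
Proof.
move=> be_ge0 be'_gt0 /andP [t_ge0 t_lt1] ha hb.
have -> : sqnorm (t *: a + (1 - t) *: b) =
    t ^+ 2 * sqnorm a + 2 * t * (1 - t) * dot a b + (1 - t) ^+ 2 * sqnorm b.
  by rewrite !sqnorm_dot !dotDr !dotDl !dotZr !dotZl (dotC b a); ring.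
have [be0|be_neq0] := eqVneq be 0.
  move: ha; rewrite be0 expr0n mulr0 => /sqnorm_le0 ->.
  by rewrite sqnorm0 dot0l !(mulr0, add0r) exprMn mulrCA ltr_pM2l // exprn_gt0 // subr_gt0.
have be_gt0 : 0 < be by rewrite lt_neqAle eq_sym be_neq0.
have ab : 2 * be * be' * dot a b <= be' ^+ 2 * sqnorm a + be ^+ 2 * sqnorm b.
  rewrite -subr_ge0 (_ : _ - _ = sqnorm (be' *: a - be *: b)) ?sqnorm_ge0 //.
  rewrite [RHS]sqnorm_dot !dotDr !dotDl !dotNr !dotNl !dotZr !dotZl (dotC b a) -!sqnorm_dot.
  by ring.
have dot_lt : dot a b < k * be * be'.
  have ha' : be' ^+ 2 * sqnorm a <= be' ^+ 2 * (k * be ^+ 2) by rewrite ler_wpM2l ?sqr_ge0.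
  have hb' : be ^+ 2 * sqnorm b < be ^+ 2 * (k * be' ^+ 2) by rewrite ltr_pM2l ?exprn_gt0.
  have hp : 0 < 2 * be * be' by rewrite !mulr_gt0.
  by rewrite -(ltr_pM2l hp); lra.
have hA : t ^+ 2 * sqnorm a <= t ^+ 2 * (k * be ^+ 2) by rewrite ler_wpM2l ?sqr_ge0.
have hB : (1 - t) ^+ 2 * sqnorm b < (1 - t) ^+ 2 * (k * be' ^+ 2).
  by rewrite ltr_pM2l // exprn_gt0 // subr_gt0.
have hD : 2 * t * (1 - t) * dot a b <= 2 * t * (1 - t) * (k * be * be').
  by apply: ler_wpM2l; [nra | exact: ltW].
lra.
Qed.

End ConvexBounds.

Section Mform.
Variables (R : realType) (n : nat).
Implicit Types (r : R) (v m x : 'rV[R]_n) (s : 'M[R]_n).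

(* For -1 < r < 1 this is x M(z) x^T (see qform_Mz).  At r = 1 (resp. -1) the division by 0
   returns 0 and drops the (m - v)-term (resp. (m + v)-term), which vanishes there anyway. *)
Definition Mform r v m s x : R :=
  ((dot x m + dot x v) ^+ 2 / (1 + r) + (dot x m - dot x v) ^+ 2 / (1 - r)) / 2 - qform s x.

Lemma tens_tr v m : (tens v m)^T = tens m v.
Proof. by rewrite /tens trmx_mul trmxK. Qed.

Lemma S0_comb (t : R) s s' : S0 s -> S0 s' -> S0 (t *: s + (1 - t) *: s').
Proof.
move=> [sT trs] [sT' trs']; split; first by rewrite linearD /= !linearZ /= sT sT'.
by rewrite mxtraceD !mxtraceZ trs trs' !mulr0 addr0.
Qed.

Lemma tensB_sym v s : S0 s -> (tens v v - s)^T = tens v v - s.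
Proof. by case=> sT _; rewrite linearB /= tens_tr sT. Qed.

Lemma qform_tensB v s x : qform (tens v v - s) x = dot x v ^+ 2 - qform s x.
Proof. by rewrite qformB qform_tens expr2. Qed.

Lemma Mz_sym r v m s p : S0 s -> (Mz (r, v, m, s, p))^T = Mz (r, v, m, s, p).
Proof.
case=> sT _; rewrite /Mz raddfB /= sT linearZ /=; congr (_ *: _ - _).
by rewrite raddfD raddfB /= linearZ raddfD /= !tens_tr [tens v m + _]addrC.
Qed.

Lemma qform_Mz r v m s p x : -1 < r < 1 -> qform (Mz (r, v, m, s, p)) x = Mform r v m s x.
Proof.
case/andP => r_gtN1 r_lt1.
have r1 : 1 + r != 0 by rewrite gt_eqF //; lra.
have r1' : 1 - r != 0 by rewrite gt_eqF //; lra.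
have r2 : 1 - r ^+ 2 != 0 by rewrite (_ : 1 - r ^+ 2 = (1 + r) * (1 - r)) ?mulf_neq0 //; ring.
rewrite /Mz /Mform qformB qformZ !qformD qformN qformZ qformD !qform_tens.
by field; rewrite r1 r1' r2.
Qed.

Lemma Mform_leE r v m s x (E : R) : -1 < r < 1 ->
  (Mform r v m s x <= E) =
  ((1 - r) * (dot x m + dot x v) ^+ 2 + (1 + r) * (dot x m - dot x v) ^+ 2 <=
     2 * (1 - r) * (1 + r) * (qform s x + E)).
Proof.
case/andP => r_gtN1 r_lt1.
have r1 : 1 + r != 0 by rewrite gt_eqF //; lra.
have r1' : 1 - r != 0 by rewrite gt_eqF //; lra.
have d_gt0 : 0 < 2 * (1 - r) * (1 + r) by rewrite !mulr_gt0 //; lra.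
rewrite /Mform lerBlDl -(ler_pM2l d_gt0); congr (_ <= _).
by field; rewrite r1 r1'.
Qed.

Lemma Mform_ge_sqr r v m s x : -1 < r < 1 -> dot x m ^+ 2 - qform s x <= Mform r v m s x.
Proof.
case/andP => r_gtN1 r_lt1.
have r1 : 1 + r != 0 by rewrite gt_eqF //; lra.
have r1' : 1 - r != 0 by rewrite gt_eqF //; lra.
rewrite -subr_ge0 (_ : _ - _ = (dot x v - r * dot x m) ^+ 2 / ((1 + r) * (1 - r))).
  by rewrite divr_ge0 ?sqr_ge0 // mulr_ge0 //; lra.
by rewrite /Mform; field; rewrite r1 r1'.
Qed.

Lemma Mform0 r v m s : Mform r v m s 0 = 0.
Proof. by rewrite /Mform !dot0l qform0v addr0 subrr expr0n !mul0r addr0 mul0r subrr. Qed.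

Lemma Mform1 v s x : Mform 1 v v s x = dot x v ^+ 2 - qform s x.
Proof. by rewrite /Mform subrr expr0n mul0r addr0; congr (_ - _); field. Qed.

Lemma MformN1 v s x : Mform (-1) v (- v) s x = dot x v ^+ 2 - qform s x.
Proof. by rewrite /Mform dotNr addNr expr0n mul0r add0r; congr (_ - _); field. Qed.

Lemma Mform_comb r v m s r' v' m' s' t x (E E' : R) :
  -1 <= r <= 1 -> -1 < r' < 1 -> 0 <= t < 1 ->
  (r = -1 -> m = - v) -> (r = 1 -> m = v) ->
  Mform r v m s x <= E -> Mform r' v' m' s' x < E' ->
  Mform (t * r + (1 - t) * r') (t *: v + (1 - t) *: v') (t *: m + (1 - t) *: m')
        (t *: s + (1 - t) *: s') x < t * E + (1 - t) * E'.
Proof.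
move=> /andP [r_geN1 r_le1] /andP [r'_gtN1 r'_lt1] t01 mN mP.
have /andP [t_ge0 t_lt1] := t01.
rewrite /Mform !dotDr !dotZr qformD !qformZ.
set a := dot x m; set b := dot x v; set a' := dot x m'; set b' := dot x v'.
set q := qform s x; set q' := qform s' x => Ez E'w.
have -> : t * a + (1 - t) * a' + (t * b + (1 - t) * b') = t * (a + b) + (1 - t) * (a' + b').
  by ring.
have -> : t * a + (1 - t) * a' - (t * b + (1 - t) * b') = t * (a - b) + (1 - t) * (a' - b').
  by ring.
have -> : 1 + (t * r + (1 - t) * r') = t * (1 + r) + (1 - t) * (1 + r') by ring.
have -> : 1 - (t * r + (1 - t) * r') = t * (1 - r) + (1 - t) * (1 - r') by ring.
have plus0 : 1 + r = 0 -> a + b = 0.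
  by move=> r1; rewrite /a /b mN ?dotNr ?addNr //; lra.
have minus0 : 1 - r = 0 -> a - b = 0.
  by move=> r1; rewrite /a /b mP ?subrr //; lra.
have [r_p r_m r'_p r'_m] : [/\ 0 <= 1 + r, 0 <= 1 - r, 0 < 1 + r' & 0 < 1 - r'].
  by split; lra.
have cvx_plus := sqr_div_convex (a' + b') r_p plus0 r'_p t01.
have cvx_minus := sqr_div_convex (a' - b') r_m minus0 r'_m t01.
have Ez' := ler_wpM2l t_ge0 Ez.
have E'w' : (1 - t) * (((a' + b') ^+ 2 / (1 + r') + (a' - b') ^+ 2 / (1 - r')) / 2 - q') <
    (1 - t) * E' by rewrite ltr_pM2l // subr_gt0.
by lra.
Qed.

End Mform.

Section UClosure.
Variables (R : realType) (n : nat) (e : R -> R).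
Hypotheses (n_gt0 : (0 < n)%N) (e_affine : affine e).
Hypotheses (e1_gt0 : 0 < e 1) (eN1_gt0 : 0 < e (-1)).
Implicit Types (z w : Z R n) (r : R) (v m x : 'rV[R]_n) (s : 'M[R]_n).

Lemma e_comb t r r' : e (t * r + (1 - t) * r') = t * e r + (1 - t) * e r'.
Proof. by have [a [b eE]] := e_affine; rewrite !eE; ring. Qed.

Lemma e0_gt0 : 0 < e 0.
Proof. by have [a [b eE]] := e_affine; move: e1_gt0 eN1_gt0; rewrite !eE; lra. Qed.

Lemma e_continuous : continuous e.
Proof.
have [a [b eE]] := e_affine; rewrite (funext eE).
apply: continuous_add; first exact: cst_continuous.
by apply: continuous_mul; [exact: cst_continuous | move=> r; exact: cvg_id].
Qed.

Lemma T_denoms_gt0 r : -1 < r < 1 -> 0 < n%:R * (r + 1) ^+ 2 /\ 0 < n%:R * (r - 1) ^+ 2 :> R.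
Proof.
case/andP => r_gtN1 r_lt1; have n_pos : 0 < n%:R :> R by rewrite ltr0n.
by split; rewrite mulr_gt0 // exprn_even_gt0 //=; apply/negP => /eqP; lra.
Qed.

Lemma Qz_le r v m s p (k : R) : S0 s -> -1 < r < 1 ->
  Qz (r, v, m, s, p) <= k <-> forall x, Mform r v m s x <= k * sqnorm x.
Proof.
move=> sS r_in; rewrite /Qz (lambda_max_le n_gt0 _ (Mz_sym _ _ _ _ sS)).
by split => Mk x; have := Mk x; rewrite qform_Mz.
Qed.

Lemma Qz_lt r v m s p (k : R) : S0 s -> -1 < r < 1 ->
  Qz (r, v, m, s, p) < k <-> forall x, x != 0 -> Mform r v m s x < k * sqnorm x.
Proof.
move=> sS r_in; rewrite /Qz (lambda_max_lt n_gt0 _ (Mz_sym _ _ _ _ sS)).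
by split => Mk x; have := Mk x; rewrite qform_Mz.
Qed.

Definition inU z : Prop :=
  let: (r, v, m, s, _) := z in
  [/\ S0 s, -1 < r < 1, sqnorm (m + v) < e 1 * (n%:R * (r + 1) ^+ 2),
      sqnorm (m - v) < e (-1) * (n%:R * (r - 1) ^+ 2) &
      forall x, x != 0 -> Mform r v m s x < e r * sqnorm x].

Definition inUbar z : Prop :=
  let: (r, v, m, s, _) := z in
  [/\ S0 s, -1 <= r <= 1, sqnorm (m + v) <= e 1 * (n%:R * (r + 1) ^+ 2),
      sqnorm (m - v) <= e (-1) * (n%:R * (r - 1) ^+ 2) &
      forall x, Mform r v m s x <= e r * sqnorm x].


Lemma UsetE z : Uset e z <-> inU z.
Proof.
case: z => [[[[r v] m] s] p] /=; split.
- case=> sS [r_in [Tp [Tm Q]]]; have [d1 d2] := T_denoms_gt0 r_in.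
  by split => //; [rewrite -ltr_pdivrMr | rewrite -ltr_pdivrMr | apply/(Qz_lt v m p _ sS r_in)].
- case=> sS r_in Tp Tm Q; have [d1 d2] := T_denoms_gt0 r_in.
  split=> //; split=> //; split; first by rewrite ltr_pdivrMr.
  by split; [rewrite ltr_pdivrMr | exact/(Qz_lt v m p _ sS r_in)].
Qed.

Lemma U0bar_inUbar z : U0bar e z -> inUbar z.
Proof.
case: z => [[[[r v] m] s] p] /= [sS [r_in [Tp [Tm Q]]]].
have [d1 d2] := T_denoms_gt0 r_in; have /andP [r_gtN1 r_lt1] := r_in.
split => //; first by rewrite !ltW.
- by rewrite -ler_pdivrMr.
- by rewrite -ler_pdivrMr.
- exact/(Qz_le v m p _ sS r_in).
Qed.

Lemma inU_inUbar z : inU z -> inUbar z.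
Proof.
case: z => [[[[r v] m] s] p] [sS /andP [r_gtN1 r_lt1] Tp Tm Q].
split => //; [by rewrite !ltW | exact: ltW | exact: ltW |].
by move=> x; have [->|/Q/ltW //] := eqVneq x 0; rewrite Mform0 sqnorm0 mulr0.
Qed.

Lemma Kplus'_inUbar z : Kplus' e z -> inUbar z.
Proof.
case: z => [[[[r v] m] s] p] /= [sS [-> [-> vs_le]]].
move/(lambda_max_le n_gt0 _ (tensB_sym v sS)) : vs_le => vs_le.
have := mxtrace_le_qform vs_le; rewrite raddfB /= tr_tens sS.2 subr0 => v_le.
split => //.
- by apply/andP; split; lra.
- by rewrite sqnorm_double; lra.
- by rewrite !subrr sqnorm0 expr0n !mulr0.
- by move=> x; rewrite Mform1 -qform_tensB.
Qed.

Lemma Kminus'_inUbar z : Kminus' e z -> inUbar z.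
Proof.
case: z => [[[[r v] m] s] p] /= [sS [-> [-> vs_le]]].
move/(lambda_max_le n_gt0 _ (tensB_sym v sS)) : vs_le => vs_le.
have := mxtrace_le_qform vs_le; rewrite raddfB /= tr_tens sS.2 subr0 => v_le.
split => //.
- by apply/andP; split; lra.
- by rewrite !addNr sqnorm0 expr0n !mulr0.
- by rewrite -opprD sqnormN sqnorm_double; lra.
- by move=> x; rewrite MformN1 -qform_tensB.
Qed.

Lemma inUbar_inU_comb z w t : inUbar z -> inU w -> 0 <= t < 1 -> inU (t *: z + (1 - t) *: w).
Proof.
case: z => [[[[r v] m] s] p]; case: w => [[[[r' v'] m'] s'] p'].
move=> [sS r_in Tp Tm Q] [sS' r'_in Tp' Tm' Q'] t01; rewrite /inU /=.
rewrite -[t *: r]/(t * r) -[(1 - t) *: r']/((1 - t) * r').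
have /andP [r_geN1 r_le1] := r_in; have /andP [r'_gtN1 r'_lt1] := r'_in.
have /andP [t_ge0 t_lt1] := t01.
have mN : r = -1 -> m = - v.
  move=> rN; move: Tp; rewrite rN addNr expr0n !mulr0 => /sqnorm_le0/eqP.
  by rewrite addr_eq0 => /eqP.
have mP : r = 1 -> m = v.
  by move=> rP; move: Tm; rewrite rP subrr expr0n !mulr0 => /sqnorm_le0/subr0_eq.
split; first exact: S0_comb.
- by apply/andP; split; nra.
- rewrite addrACA -!scalerDr (_ : _ + 1 = t * (r + 1) + (1 - t) * (r' + 1)); last by ring.
  by rewrite mulrA; apply: sqnorm_cone_comb; rewrite -?mulrA //; lra.
- rewrite opprD addrACA -!scalerBr mulrA.
  rewrite (_ : (_ - 1) ^+ 2 = (t * (1 - r) + (1 - t) * (1 - r')) ^+ 2); last by ring.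
  apply: sqnorm_cone_comb => //; [lra | lra | move: Tm | move: Tm'];
    by rewrite mulrA -sqrrN opprB.
- move=> x x0; rewrite e_comb [_ * sqnorm x]mulrDl -!mulrA.
  exact: Mform_comb r_in r'_in t01 mN mP (Q x) (Q' x x0).
Qed.

Lemma inU0 : inU 0.
Proof.
have n_pos : 0 < n%:R :> R by rewrite ltr0n.
split; first by split; [exact: trmx0 | exact: mxtrace0].
- by apply/andP; split; lra.
- by rewrite addr0 sqnorm0 add0r expr1n mulr1 mulr_gt0.
- by rewrite subr0 sqnorm0 sub0r sqrrN expr1n mulr1 mulr_gt0.
- move=> x x0; rewrite /Mform !dot0r qform0 addr0 subrr expr0n !mul0r addr0 mul0r subrr.
  by rewrite mulr_gt0 ?e0_gt0 ?sqnorm_gt0.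
Qed.

Lemma inUbar_closure z : inUbar z -> closure (Uset e) z.
Proof.
move=> Ubar_z B; rewrite -[z in nbhs z]scale1r.
move=> /scalel_continuous /nbhs_ballP [d /= d_gt0 dB].
pose u := d / (d + 2).
have [u_gt0 u_lt1 u_ltd] : [/\ 0 < u, u < 1 & u < d].
  have d2_gt0 : 0 < d + 2 by lra.
  by rewrite /u !ltr_pdivrMr // divr_gt0 //; split; nra.
(* (1 - u) z lies on the segment from z to 0, which is in U. *)
exists ((1 - u) *: z); split.
  apply/UsetE; rewrite -[_ *: z]addr0 -(scaler0 _ (1 - (1 - u))).
  by apply: inUbar_inU_comb Ubar_z inU0 _; apply/andP; split; lra.
by apply: dB; rewrite -ball_normE /ball_ /= opprB addrC subrK gtr0_norm.
Qed.

Lemma Uset_convex : convex_in (@Uset R n e).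
Proof.
move=> z w t /UsetE Uz /UsetE Uw /andP [t_ge0 t_le1]; apply/UsetE.
have [->|t_neq1] := eqVneq t 1; first by rewrite subrr scale0r addr0 scale1r.
by apply: inUbar_inU_comb (inU_inUbar Uz) Uw _; rewrite t_ge0 lt_neqAle t_neq1.
Qed.

Lemma rho_continuous : continuous (fun z : Z R n => z.1.1.1.1).
Proof. by do 4!apply: continuous_fst; move=> z; exact: cvg_id. Qed.

Lemma v_continuous : continuous (fun z : Z R n => z.1.1.1.2).
Proof. by apply: continuous_snd; do 3!apply: continuous_fst; move=> z; exact: cvg_id. Qed.

Lemma m_continuous : continuous (fun z : Z R n => z.1.1.2).
Proof. by apply: continuous_snd; do 2!apply: continuous_fst; move=> z; exact: cvg_id. Qed.

Lemma sigma_continuous : continuous (fun z : Z R n => z.1.2).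
Proof. by apply: continuous_snd; apply: continuous_fst; move=> z; exact: cvg_id. Qed.

Lemma closure_U_le (f g : Z R n -> R) z : continuous f -> continuous g ->
  (forall w, inU w -> f w <= g w) -> closure (Uset e) z -> f z <= g z.
Proof. by move=> cf cg fg; apply: closure_le_continuous cf cg _ z => w /UsetE /fg. Qed.

Lemma closure_U_eq (f g : Z R n -> R) z : continuous f -> continuous g ->
  (forall w, inU w -> f w = g w) -> closure (Uset e) z -> f z = g z.
Proof.
move=> cf cg fg Uz; apply/eqP; rewrite eq_le.
by rewrite (closure_U_le cf cg _ Uz) ?(closure_U_le cg cf _ Uz) // => w /fg ->.
Qed.

Lemma closure_U_S0 r v m s p : closure (Uset e) (r, v, m, s, p) -> S0 s.
Proof.
move=> Uz; split.
  apply/matrixP => i j; rewrite mxE.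
  apply: (closure_U_eq (f := fun z => z.1.2 j i) (g := fun z => z.1.2 i j)) Uz.
  - exact: continuousT_comp sigma_continuous (@coord_continuous R n n j i).
  - exact: continuousT_comp sigma_continuous (@coord_continuous R n n i j).
  - by case=> [[[[? ?] ?] s'] ?] [[sT' _] _ _ _ _]; rewrite -[in RHS]sT' mxE.
apply: (@closure_U_eq (fun z => \tr z.1.2) (fun=> 0) (r, v, m, s, p) _ _ _ Uz).
- apply: (continuousT_comp sigma_continuous).
  by apply: continuous_sum => i; exact: coord_continuous.
- exact: cst_continuous.
- by case=> [[[[? ?] ?] s'] ?] [[_ trs'] _ _ _ _].
Qed.

Lemma closure_U_rho r v m s p : closure (Uset e) (r, v, m, s, p) -> -1 <= r <= 1.
Proof.
move=> Uz; apply/andP; split.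
- apply: (@closure_U_le (fun=> -1) (fun z => z.1.1.1.1) (r, v, m, s, p) _ rho_continuous _ Uz).
    exact: cst_continuous.
  by case=> [[[[? ?] ?] ?] ?] [_ /andP [/ltW]].
- apply: (@closure_U_le (fun z => z.1.1.1.1) (fun=> 1) (r, v, m, s, p) rho_continuous _ _ Uz).
    exact: cst_continuous.
  by case=> [[[[? ?] ?] ?] ?] [_ /andP [_ /ltW]].
Qed.

Lemma closure_U_T r v m s p : closure (Uset e) (r, v, m, s, p) ->
  sqnorm (m + v) <= e 1 * (n%:R * (r + 1) ^+ 2) /\
  sqnorm (m - v) <= e (-1) * (n%:R * (r - 1) ^+ 2).
Proof.
move=> Uz; have cT (c d : R) : continuous (fun z : Z R n => c * (n%:R * (z.1.1.1.1 + d) ^+ 2)).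
  do 2![apply: continuous_mul; first exact: cst_continuous].
  by apply: continuous_sqr; apply: continuous_add; [exact: rho_continuous | exact: cst_continuous].
split.
- apply: (@closure_U_le (fun z => sqnorm (z.1.1.2 + z.1.1.1.2)) _ (r, v, m, s, p)
    _ (cT (e 1) 1) _ Uz).
    apply: (continuousT_comp _ (@sqnorm_continuous R n)).
    exact: continuous_add m_continuous v_continuous.
  by case=> [[[[? ?] ?] ?] ?] [_ _ /ltW].
- apply: (@closure_U_le (fun z => sqnorm (z.1.1.2 - z.1.1.1.2)) _ (r, v, m, s, p)
    _ (cT (e (-1)) (-1)) _ Uz).
    apply: (continuousT_comp _ (@sqnorm_continuous R n)).
    exact: continuous_add m_continuous (continuous_opp v_continuous).
  by case=> [[[[? ?] ?] ?] ?] [_ _ _ /ltW].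
Qed.

(* Mform jumps at r = +-1, so its bound passes to the closure in cross-multiplied form; the
   second bound is what survives at r = +-1. *)
Lemma closure_U_Mform r v m s p x : closure (Uset e) (r, v, m, s, p) ->
  (1 - r) * (dot x m + dot x v) ^+ 2 + (1 + r) * (dot x m - dot x v) ^+ 2 <=
    2 * (1 - r) * (1 + r) * (qform s x + e r * sqnorm x) /\
  dot x m ^+ 2 - qform s x <= e r * sqnorm x.
Proof.
move=> Uz; pose rh (z : Z R n) := z.1.1.1.1.
pose a (z : Z R n) := dot x z.1.1.2; pose b (z : Z R n) := dot x z.1.1.1.2.
have ca : continuous a := continuousT_comp m_continuous (@dot_continuous R n x).
have cb : continuous b := continuousT_comp v_continuous (@dot_continuous R n x).
have cs : continuous (fun z : Z R n => qform z.1.2 x).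
  exact: continuousT_comp sigma_continuous (@qform_continuous_mx R n x).
have ce : continuous (fun z : Z R n => e (rh z) * sqnorm x).
  apply: continuous_mul; last exact: cst_continuous.
  exact: continuousT_comp rho_continuous e_continuous.
have [c_minus c_plus] : continuous (fun z => 1 - rh z) /\ continuous (fun z => 1 + rh z).
  split; apply: continuous_add; try exact: cst_continuous; last exact: rho_continuous.
  exact: continuous_opp rho_continuous.
have Mform_le w : inU w -> let: (r', v', m', s', _) := w in
    -1 < r' < 1 /\ Mform r' v' m' s' x <= e r' * sqnorm x.
  by case: w => [[[[? ?] ?] ?] ?] Uw; case: (Uw) => _ r'_in _ _ _; case: (inU_inUbar Uw).
split.
- apply: (@closure_U_le
    (fun z => (1 - rh z) * (a z + b z) ^+ 2 + (1 + rh z) * (a z - b z) ^+ 2)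
    (fun z => 2 * (1 - rh z) * (1 + rh z) * (qform z.1.2 x + e (rh z) * sqnorm x))
    (r, v, m, s, p) _ _ _ Uz).
  + apply: continuous_add; apply: continuous_mul => //; apply: continuous_sqr.
      exact: continuous_add ca cb.
    exact: continuous_add ca (continuous_opp cb).
  + apply: continuous_mul; last exact: continuous_add cs ce.
    by apply: continuous_mul => //; apply: continuous_mul => //; exact: cst_continuous.
  + by case=> [[[[? ?] ?] ?] ?] /Mform_le [r'_in]; rewrite Mform_leE.
- apply: (@closure_U_le (fun z => a z ^+ 2 - qform z.1.2 x) (fun z => e (rh z) * sqnorm x)
    (r, v, m, s, p) _ ce _ Uz).
    exact: continuous_add (continuous_sqr ca) (continuous_opp cs).
  by case=> [[[[? ?] ?] ?] ?] /Mform_le [r'_in]; apply: le_trans; exact: Mform_ge_sqr.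
Qed.

Lemma closure_U_sub z :
  closure (Uset e) z -> (@Kminus' R n e `|` @U0bar R n e `|` @Kplus' R n e) z.
Proof.
case: z => [[[[r v] m] s] p] Uz; have sS := closure_U_S0 Uz.
have /andP [r_geN1 r_le1] := closure_U_rho Uz; have [Tp Tm] := closure_U_T Uz.
have M x := closure_U_Mform x Uz.
have [r1|r_neq1] := eqVneq r 1.
  have mv : m = v by apply/subr0_eq/sqnorm_le0; move: Tm; rewrite r1 subrr expr0n !mulr0.
  right; do 3!split => //; apply/(lambda_max_le n_gt0 _ (tensB_sym v sS)) => x.
  by rewrite qform_tensB -mv -r1; exact: (M x).2.
have [rN1|r_neqN1] := eqVneq r (-1).
  have mv : m = - v.
    apply/eqP; rewrite -addr_eq0; apply/eqP/sqnorm_le0.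
    by move: Tp; rewrite rN1 addNr expr0n !mulr0.
  left; left; do 3!split => //; apply/(lambda_max_le n_gt0 _ (tensB_sym v sS)) => x.
  by rewrite qform_tensB -sqrrN -dotNr -mv -rN1; exact: (M x).2.
have r_in : -1 < r < 1 by rewrite !lt_neqAle r_geN1 r_le1 r_neq1 eq_sym r_neqN1.
have [d1 d2] := T_denoms_gt0 r_in.
left; right; do 2!split => //; split; first by rewrite ler_pdivrMr.
split; first by rewrite ler_pdivrMr.
by apply/(Qz_le v m p _ sS r_in) => x; rewrite Mform_leE //; exact: (M x).1.
Qed.

Lemma closure_Uset :
  closure (@Uset R n e) = @Kminus' R n e `|` @U0bar R n e `|` @Kplus' R n e.
Proof.
apply/seteqP; split => [z /closure_U_sub //|z [[/Kminus'_inUbar|/U0bar_inUbar]|/Kplus'_inUbar]];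
  exact: inUbar_closure.
Qed.

Lemma Kset_sub : @Kset R n e `<=` @Kminus' R n e `|` @Kplus' R n e.
Proof.
case=> [[[[r v] m] s] p] /= [sS [r_pm [-> vs]]].
have vs_le : lambda_max (tens v v - s) <= e r.
  rewrite vs; apply/(lambda_max_le n_gt0); first by rewrite linearZ /= trmx1.
  by move=> x; rewrite qformZ qform_scalar mul1r.
by case: r_pm => r_pm; [right | left]; rewrite r_pm in vs_le *;
  rewrite ?scale1r ?scaleN1r.
Qed.

End UClosure.

Theorem lemma3p8 (R : realType) (n : nat) (e : R -> R) :
  (2 <= n)%N -> affine e -> 0 < e 1 -> 0 < e (-1) ->
  convex_in (@Uset R n e) /\
  closure (@Uset R n e) = @Kminus' R n e `|` @U0bar R n e `|` @Kplus' R n e /\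
  @Kset R n e `<=` closure (@Uset R n e).
Proof.
move=> n2 e_affine e1_gt0 eN1_gt0; have n_gt0 : (0 < n)%N by exact: leq_trans n2.
have closureE := closure_Uset n_gt0 e_affine e1_gt0 eN1_gt0.
split; first exact: Uset_convex n_gt0 e_affine.
split => // z /(Kset_sub n_gt0) [Kz|Kz]; rewrite closureE; [left; left | right] => //.
Qed.
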